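(* Let $C:=\sqrt{\frac{15+\sqrt{65}}{8}}$ and let $g:\mathbb{R}\to\mathbb{R}$ be $$g(z):=-\frac{2}{5}z^4+\frac{8}{5}Cz^3+\Big(\frac32-\frac{12}{5}C^2\Big)z^2+\Big(\frac85C^3-3C\Big)z+1 .$$ For $W=[w_1,w_2,w_3]$ with $w_1,w_2,w_3\in\mathbb{R}^3$, define $f(\cdot;W):\mathbb{R}^3\to\mathbb{R}^3$ by $f(x;W):=[g(\langle w_1,x\rangle),g(\langle w_2,x\rangle),g(\langle w_3,x\rangle)]^\top$. Then there exists such a $W$ for which $f(\cdot;W)$ has two distinct fixed points $p_1,p_2\in\mathbb{R}^3$ such that for each $i\in\{1,2\}$ there exist constants $\epsilon_i>0$, $c_i>0$ and $K_i\in[0,1)$ with the following property: for every initial point $x^{(0)}\in[p_{i,1}-\epsilon_i,p_{i,1}+\epsilon_i]\times\{1\}\times\{1\}$, the fixed-point iteration $x^{(t)}=f(x^{(t-1)};W)$ ($t\ge1$) converges to $p_i$, and for every $t\ge2$, $$\|x^{(t)}-p_i\|_\infty\le K_i^t\cdot c_i\epsilon_i .$$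
   Context: $p_{i,1}$ denotes the first coordinate of $p_i$; $\|\cdot\|_\infty$ is the $\ell_\infty$ norm. A fixed point of $F$ is a point $p$ with $F(p)=p$. *)

From Stdlib Require Import Reals.
Open Scope R_scope.

Definition vec3 : Type := (R * R * R)%type.

Definition v1 (x : vec3) : R := fst (fst x).
Definition v2 (x : vec3) : R := snd (fst x).
Definition v3 (x : vec3) : R := snd x.

Definition inner3 (w x : vec3) : R := v1 w * v1 x + v2 w * v2 x + v3 w * v3 x.

Definition sub3 (x y : vec3) : vec3 := (v1 x - v1 y, v2 x - v2 y, v3 x - v3 y).
Definition ninf (x : vec3) : R := Rmax (Rabs (v1 x)) (Rmax (Rabs (v2 x)) (Rabs (v3 x))).

Definition Cst : R := sqrt ((15 + sqrt 65) / 8).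

Definition g (z : R) : R :=
  - (2/5) * z ^ 4 + (8/5) * Cst * z ^ 3 + (3/2 - (12/5) * Cst ^ 2) * z ^ 2
  + ((8/5) * Cst ^ 3 - 3 * Cst) * z + 1.

Definition fW (w1 w2 w3 : vec3) (x : vec3) : vec3 :=
  (g (inner3 w1 x), g (inner3 w2 x), g (inner3 w3 x)).

Definition iterate (F : vec3 -> vec3) (x0 : vec3) (t : nat) : vec3 := Nat.iter t F x0.

Definition local_conv (F : vec3 -> vec3) (p : vec3) : Prop :=
  exists eps c K : R, 0 < eps /\ 0 < c /\ 0 <= K < 1 /\
    forall a : R, v1 p - eps <= a <= v1 p + eps ->
      Un_cv (fun t => ninf (sub3 (iterate F (a, 1, 1) t) p)) 0 /\
      forall t : nat, (2 <= t)%nat ->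
        ninf (sub3 (iterate F (a, 1, 1) t) p) <= K ^ t * c * eps.

From Stdlib Require Import Reals Lra Psatz.
Open Scope R_scope.

(* Since C^2 is a root of 4u^2 - 15u + 10, the constant, linear and cubic
   terms of g around C vanish: g (C + y) = 3/2 y^2 - 2/5 y^4 =: q y.  Take
   w1 = (a, C, 0) and w2 = w3 = 0.  Then f maps (z, 1, 1) to (phi z, 1, 1)
   with phi z = q (a z), and a = sqrt(15/8) / (45/32) puts the fixed point
   of phi at 45/32 onto the critical point sqrt(15/8) of q, where q takes
   the value 45/32.  So 0 and 45/32 are both superattracting fixed points
   of phi: nearby, phi z lies within M (z - z0)^2 of z0, hence on a small
   interval phi contracts towards z0 with a factor below 1/2, which gives
   the geometric convergence. *)

Section LineContraction.

Variables (h : R -> R) (zs eps K : R).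
Hypothesis eps_pos : 0 < eps.
Hypothesis K_range : 0 <= K < 1.
Hypothesis h_contracts :
  forall z, Rabs (z - zs) <= eps -> Rabs (h z - zs) <= K * Rabs (z - zs).

Lemma iter_contraction z t :
  Rabs (z - zs) <= eps -> Rabs (Nat.iter t h z - zs) <= K ^ t * Rabs (z - zs).
Proof.
  intro Hz; induction t as [|t IH]; simpl; [lra|].
  assert (HKt : 0 <= K ^ t <= 1).
  { destruct t as [|t]; [simpl; lra|].
    pose proof (pow_lt_1_compat K (S t) K_range (Nat.lt_0_succ t)); lra. }
  pose proof (Rabs_pos (z - zs)).
  assert (Hin : Rabs (Nat.iter t h z - zs) <= eps) by nra.
  eapply Rle_trans; [exact (h_contracts _ Hin)|]. nra.
Qed.

Lemma iter_contraction_cv z :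
  Rabs (z - zs) <= eps -> Un_cv (fun t => Rabs (Nat.iter t h z - zs)) 0.
Proof.
  intros Hz e He.
  assert (HK : Rabs K < 1) by (rewrite Rabs_right; lra).
  destruct (pow_lt_1_zero K HK (e / eps)) as [N HN].
  { apply Rdiv_lt_0_compat; lra. }
  exists N; intros t Ht.
  unfold Rdist; rewrite Rminus_0_r, Rabs_Rabsolu.
  specialize (HN t Ht); rewrite Rabs_right in HN by (apply Rle_ge, pow_le; lra).
  apply (Rmult_lt_compat_r eps) in HN; [|lra].
  replace (e / eps * eps) with e in HN by (field; lra).
  pose proof (pow_le K t (proj1 K_range)).
  pose proof (iter_contraction z t Hz). nra.
Qed.

End LineContraction.

Lemma contraction_of_quadratic_bound (h : R -> R) (zs eps M : R) :
  0 <= M ->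
  (forall z, Rabs (z - zs) <= eps -> Rabs (h z - zs) <= M * (z - zs) ^ 2) ->
  forall z, Rabs (z - zs) <= eps -> Rabs (h z - zs) <= M * eps * Rabs (z - zs).
Proof.
  intros HM Hq z Hz.
  pose proof (Hq z Hz) as Hqz; rewrite <- (pow2_abs (z - zs)) in Hqz.
  eapply Rle_trans; [exact Hqz|].
  rewrite Rmult_assoc; apply Rmult_le_compat_l; [exact HM|].
  pose proof (Rabs_pos (z - zs)). nra.
Qed.

Lemma iterate_on_line (F : vec3 -> vec3) (h : R -> R) z t :
  (forall y, F (y, 1, 1) = (h y, 1, 1)) ->
  iterate F (z, 1, 1) t = (Nat.iter t h z, 1, 1).
Proof.
  intro HF; induction t as [|t IH]; [reflexivity|].
  unfold iterate in *; simpl; rewrite IH; apply HF.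
Qed.

Lemma ninf_sub_on_line y z : ninf (sub3 (y, 1, 1) (z, 1, 1)) = Rabs (y - z).
Proof.
  unfold ninf, sub3, v1, v2, v3; simpl.
  rewrite Rminus_diag, Rabs_R0, (Rmax_left 0 0) by lra.
  apply Rmax_left, Rabs_pos.
Qed.

Lemma local_conv_of_line_contraction (F : vec3 -> vec3) (h : R -> R) zs eps K :
  (forall y, F (y, 1, 1) = (h y, 1, 1)) ->
  0 < eps -> 0 <= K < 1 ->
  (forall z, Rabs (z - zs) <= eps -> Rabs (h z - zs) <= K * Rabs (z - zs)) ->
  local_conv F (zs, 1, 1).
Proof.
  intros HF He HK Hc; exists eps, 1, K.
  do 3 (split; [lra|]).
  intros a Ha; unfold v1 in Ha; simpl in Ha.
  assert (Hz : Rabs (a - zs) <= eps) by (apply Rabs_le; lra).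
  split.
  - apply Un_cv_ext with (fun t => Rabs (Nat.iter t h a - zs)).
    + intro t; rewrite (iterate_on_line F h) by exact HF.
      symmetry; apply ninf_sub_on_line.
    + exact (iter_contraction_cv h zs eps K He HK Hc a Hz).
  - intros t _.
    rewrite (iterate_on_line F h) by exact HF; rewrite ninf_sub_on_line.
    pose proof (pow_le K t (proj1 HK)).
    pose proof (iter_contraction h zs eps K HK Hc a t Hz). nra.
Qed.

Lemma Cst_sqr_root : 4 * (Cst ^ 2) ^ 2 - 15 * Cst ^ 2 + 10 = 0.
Proof.
  assert (HC : Cst ^ 2 = (15 + sqrt 65) / 8).
  { unfold Cst; rewrite <- Rsqr_pow2; apply Rsqr_sqrt.
    pose proof (sqrt_pos 65); lra. }
  pose proof (sqrt_sqrt 65 ltac:(lra)).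
  rewrite HC; field_simplify; nra.
Qed.

Lemma g_shift y : g (Cst + y) = 3/2 * y ^ 2 - 2/5 * y ^ 4.
Proof.
  transitivity (3/2 * y ^ 2 - 2/5 * y ^ 4
                + (4 * (Cst ^ 2) ^ 2 - 15 * Cst ^ 2 + 10) / 10).
  - unfold g; field.
  - rewrite Cst_sqr_root; field.
Qed.

Definition scale : R := 32/45 * sqrt (15/8).

Lemma scale_sqr : scale ^ 2 = 128/135.
Proof.
  unfold scale; rewrite Rpow_mult_distr, <- (Rsqr_pow2 (sqrt _)), Rsqr_sqrt by lra.
  field.
Qed.

Definition phi (z : R) : R := 64/45 * z ^ 2 - (32/45) ^ 3 * z ^ 4.

Lemma g_scaled z : g (scale * z + Cst) = phi z.
Proof.
  rewrite Rplus_comm, g_shift; unfold phi.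
  rewrite !Rpow_mult_distr.
  replace (scale ^ 4) with ((scale ^ 2) ^ 2) by ring.
  rewrite scale_sqr; field.
Qed.

Definition w_first : vec3 := (scale, Cst, 0).
Definition w_zero : vec3 := (0, 0, 0).

Lemma fW_on_line z : fW w_first w_zero w_zero (z, 1, 1) = (phi z, 1, 1).
Proof.
  unfold fW, inner3, w_first, w_zero, v1, v2, v3; simpl.
  replace (scale * z + Cst * 1 + 0 * 1) with (scale * z + Cst) by ring.
  replace (0 * z + 0 * 1 + 0 * 1) with 0 by ring.
  rewrite g_scaled; f_equal; f_equal; unfold g; ring.
Qed.

Lemma Rabs_le_between x b : Rabs x <= b -> - b <= x <= b.
Proof.
  intro H; pose proof (Rle_abs x); pose proof (Rle_abs (- x)).
  rewrite Rabs_Ropp in *; lra.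
Qed.

Lemma phi_quadratic_at_0 z :
  Rabs (z - 0) <= 1/4 -> Rabs (phi z - 0) <= 64/45 * (z - 0) ^ 2.
Proof.
  rewrite !Rminus_0_r; intro Hz; apply Rabs_le_between in Hz.
  assert (E : phi z = z ^ 2 * (64/45 - (32/45) ^ 3 * z ^ 2)) by (unfold phi; ring).
  rewrite E, Rabs_mult, Rabs_right by (apply Rle_ge, pow2_ge_0).
  rewrite (Rmult_comm (64/45)); apply Rmult_le_compat_l; [apply pow2_ge_0|].
  apply Rabs_le; nra.
Qed.

Lemma phi_quadratic_at_45_32 z :
  Rabs (z - 45/32) <= 1/16 -> Rabs (phi z - 45/32) <= 3 * (z - 45/32) ^ 2.
Proof.
  set (u := z - 45/32); intro Hu; apply Rabs_le_between in Hu.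
  assert (E : phi z - 45/32
              = u ^ 2 * (-128/45 - 4 * (32/45) ^ 2 * u - (32/45) ^ 3 * u ^ 2))
    by (unfold phi, u; field).
  rewrite E, Rabs_mult, Rabs_right by (apply Rle_ge, pow2_ge_0).
  rewrite Rmult_comm; apply Rmult_le_compat_r; [apply pow2_ge_0|].
  apply Rabs_le; nra.
Qed.

Theorem lemmaB4 :
  exists w1 w2 w3 : vec3, exists p1 p2 : vec3,
    p1 <> p2 /\
    fW w1 w2 w3 p1 = p1 /\ fW w1 w2 w3 p2 = p2 /\
    local_conv (fW w1 w2 w3) p1 /\ local_conv (fW w1 w2 w3) p2.
Proof.
  exists w_first, w_zero, w_zero, (0, 1, 1), (45/32, 1, 1).
  repeat split.
  - intro E; injection E; lra.
  - rewrite fW_on_line; unfold phi; f_equal; f_equal; ring.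
  - rewrite fW_on_line; unfold phi; f_equal; f_equal; field.
  - apply (local_conv_of_line_contraction _ phi 0 (1/4) (64/45 * (1/4)));
      [exact fW_on_line | lra | lra |].
    apply contraction_of_quadratic_bound; [lra | exact phi_quadratic_at_0].
  - apply (local_conv_of_line_contraction _ phi (45/32) (1/16) (3 * (1/16)));
      [exact fW_on_line | lra | lra |].
    apply contraction_of_quadratic_bound; [lra | exact phi_quadratic_at_45_32].
Qed.
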